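(* Let $\mathcal S_1=(C,\phi_1,F)$ and $\mathcal S_2=(C,\phi_2,F)$ be two systems with common component set $C=[n]$, semicoherent structure functions $\phi_1,\phi_2$, and common lifetime distribution $F$ having no ties. Suppose that \[ \Pr\big(\mathbf X(t_1)=\mathbf x\text{ and }\mathbf X(t_2)=\mathbf y\big)=\Pr\big(\mathbf X(t_1)=\sigma(\mathbf x)\text{ and }\mathbf X(t_2)=\sigma(\mathbf y)\big) \] for all $\mathbf x,\mathbf y\in\{0,1\}^n$, all $t_1,t_2\ge0$ and all $\sigma\in\mathfrak S_n$. Then for all $t_1,t_2\ge0$, \[ \overline F_{\mathcal S_1,\mathcal S_2}(t_1,t_2)=\sum_{k=1}^n\sum_{l=1}^n s_{k,l}\,\overline F_{k:n,l:n}(t_1,t_2). \]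
   Context: Let $n\ge1$, $C=[n]$, and let $T_1,\ldots,T_n$ be nonnegative random component lifetimes with joint c.d.f. $F$ having no ties. $\mathfrak S_n$ is the symmetric group on $[n]$, and for $\mathbf x\in\{0,1\}^n$, $\sigma(\mathbf x)=(x_{\sigma^{-1}(1)},\ldots,x_{\sigma^{-1}(n)})$. A structure function $\phi\colon\{0,1\}^n\to\{0,1\}$ is semicoherent if nondecreasing in each variable with $\phi(0,\ldots,0)=0$, $\phi(1,\ldots,1)=1$; Boolean vectors are identified with subsets via $x_i=1\iff i\in A$. For $t\ge0$, $X_j(t)=\mathrm{Ind}(T_j>t)$, $\mathbf X(t)=(X_1(t),\ldots,X_n(t))$; the lifetime $T_{\mathcal S}$ of $\mathcal S=(C,\phi,F)$ is the random time with $\phi(\mathbf X(t))=1$ iff $t<T_{\mathcal S}$. $T_{k:n}$ is the $k$-th smallest lifetime. $\overline F_{\mathcal S_1,\mathcal S_2}(t_1,t_2)=\Pr(T_{\mathcal S_1}>t_1\text{ and }T_{\mathcal S_2}>t_2)$ and $\overline F_{k:n,l:n}(t_1,t_2)=\Pr(T_{k:n}>t_1\text{ and }T_{l:n}>t_2)$. The combinatorial joint structure signature $s_{k,l}$ ($k,l\in[n]$) is defined (independently of $F$) by $s_{k,l}=\overline S_{k-1,l-1}-\overline S_{k,l-1}-\overline S_{k-1,l}+\overline S_{k,l}$, where for $k,l\in\{0,\ldots,n\}$, \[ \overline S_{k,l}=\sum_{A\subseteq C,\ |A|=n-k}\ \sum_{B\subseteq C,\ |B|=n-l}q_0(A,B)\,\phi_1(A)\,\phi_2(B),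 \] and \[ q_0(A,B)=\begin{cases}\frac{(n-|A|)!\,(|A|-|B|)!\,|B|!}{n!} & \text{if } B\subseteq A,\\[2pt] \frac{(n-|B|)!\,(|B|-|A|)!\,|A|!}{n!} & \text{if } A\subseteq B,\\[2pt] 0 & \text{otherwise.}\end{cases} \] *)

From HB Require Import structures.
From mathcomp Require Import all_boot all_order all_algebra all_fingroup.
Set Implicit Arguments. Unset Strict Implicit. Unset Printing Implicit Defensive.
Import Order.TTheory GRing.Theory Num.Theory.
Local Open Scope ring_scope.

(* Every genuine probability space (restricted to its measurable events)
   satisfies this, so the theorem stated with it is (at least) as strong. *)
Definition fa_prob (R : realFieldType) (Ω : Type)
  (M : (Ω -> bool) -> Prop) (Pr : (Ω -> bool) -> R) : Prop :=
  M (fun _ => true) /\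
  (forall E, M E -> M (fun w => ~~ E w)) /\
  (forall E F, M E -> M F -> M (fun w => E w || F w)) /\
  (forall E, M E -> 0 <= Pr E) /\
  Pr (fun _ => true) = 1 /\
  (forall E F, M E -> M F -> (forall w, ~~ (E w && F w)) ->
     Pr (fun w => E w || F w) = Pr E + Pr F) /\
  (forall E F, (forall w, E w = F w) -> Pr E = Pr F).

(* X(t) as a subset of C = 'I_n : the set of components alive at time t *)
Definition Xt (R : realFieldType) (Ω : Type) (n : nat)
  (T : 'I_n -> Ω -> R) (t : R) (w : Ω) : {set 'I_n} :=
  [set j | t < T j w].

(* semicoherent structure function (Boolean vectors identified with subsets) *)
Definition semicoherent (n : nat) (phi : {set 'I_n} -> bool) : Prop :=
  (forall (A : {set 'I_n}) (i : 'I_n), phi A ==> phi (i |: A)) /\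
  phi set0 = false /\ phi setT = true.

Definition is_lifetime (R : realFieldType) (Ω : Type) (n : nat)
  (phi : {set 'I_n} -> bool) (T : 'I_n -> Ω -> R) (TS : Ω -> R) : Prop :=
  forall w t, 0 <= t -> phi (Xt T t w) = (t < TS w).

(* T_{k:n}: the k-th smallest lifetime (k >= 1) *)
Definition ostat (R : realFieldType) (Ω : Type) (n : nat)
  (T : 'I_n -> Ω -> R) (k : nat) (w : Ω) : R :=
  nth 0 (sort <=%R [seq T j w | j : 'I_n]) k.-1.

Definition ties_event (R : realFieldType) (Ω : Type) (n : nat)
  (T : 'I_n -> Ω -> R) : Ω -> bool :=
  fun w => [exists i : 'I_n, exists j : 'I_n, (i != j) && (T i w == T j w)].

Definition q0 (R : realFieldType) (n : nat) (A B : {set 'I_n}) : R :=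
  if B \subset A then
    ((n - #|A|)`! * (#|A| - #|B|)`! * #|B|`!)%:R / (n`!)%:R
  else if A \subset B then
    ((n - #|B|)`! * (#|B| - #|A|)`! * #|A|`!)%:R / (n`!)%:R
  else 0.

Definition Sbar (R : realFieldType) (n : nat)
  (phi1 phi2 : {set 'I_n} -> bool) (k l : nat) : R :=
  \sum_(A : {set 'I_n} | #|A| == (n - k)%N)
    \sum_(B : {set 'I_n} | #|B| == (n - l)%N)
      q0 R A B * (phi1 A)%:R * (phi2 B)%:R.

Definition jsig (R : realFieldType) (n : nat)
  (phi1 phi2 : {set 'I_n} -> bool) (k l : nat) : R :=
  Sbar R phi1 phi2 k.-1 l.-1 - Sbar R phi1 phi2 k l.-1
  - Sbar R phi1 phi2 k.-1 l + Sbar R phi1 phi2 k l.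

From HB Require Import structures.
From mathcomp Require Import all_boot all_order all_algebra all_fingroup.
From mathcomp Require Import zify ring.
From Stdlib Require Import FunctionalExtensionality.
Import Order.TTheory GRing.Theory Num.Theory.
Set Implicit Arguments. Unset Strict Implicit. Unset Printing Implicit Defensive.

(* Write P(A, B) for Pr(X(t1) = A, X(t2) = B).  Both sides of the identity are
   linear in P: the systems survive iff (X(t1), X(t2)) lies in phi1 x phi2, and
   T_{k:n} > t iff more than n - k components are alive at t.  Components alive
   at the later time are alive at the earlier one, so P vanishes off nested
   pairs; by exchangeability it is constant on each cardinality class of nested
   pairs, and q0 is the inverse size of that class.  Against the order-statistic
   indicators the signature telescopes to Sbar(n - |A|, n - |B|), a sum of q0
   phi1 phi2 over the class of (A, B); swapping the two class sums concludes. *)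

Section PermImset.
Variable T : finType.

Lemma mem_imset_perm (s : {perm T}) (S : {set T}) z :
  (z \in s @: S) = ((s^-1)%g z \in S).
Proof. by rewrite -{1}(invgK s) im_permV inE. Qed.

Lemma imset_permM (s s' : {perm T}) (S : {set T}) :
  (s * s')%g @: S = s' @: (s @: S).
Proof. by rewrite -imset_comp; apply: eq_imset => z; rewrite permM. Qed.

(* Induction on #|X :\: Y|: a transposition of some x in X :\: Y with some
   y in Y :\: X shrinks that difference. *)
Lemma exists_perm_on_imset (D X Y : {set T}) :
  X \subset D -> Y \subset D -> #|X| = #|Y| ->
  exists2 s : {perm T}, perm_on D s & s @: X = Y.
Proof.
move=> XD YD; move: {2}#|X :\: Y| (leqnn #|X :\: Y|) => k.
elim: k X XD => [|k IHk] X XD leXYk eqXY.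
  exists 1%g; first exact: perm_on1.
  rewrite imset_perm1; apply/eqP; rewrite eqEcard eqXY leqnn andbT.
  by rewrite -setD_eq0 -cards_eq0 -leqn0.
have [XY0|[x xXY]] := set_0Vmem (X :\: Y).
  by apply: IHk; rewrite ?XY0 ?cards0.
have [y yYX] : exists y, y \in Y :\: X.
  apply/set0Pn; rewrite -cards_eq0.
  have -> : #|Y :\: X| = #|X :\: Y|.
    by apply/eqP; rewrite -(eqn_add2l #|Y :&: X|) cardsID setIC cardsID eqXY.
  by rewrite cards_eq0; apply/set0Pn; exists x.
move: xXY yYX; rewrite !inE => /andP[xY xX] /andP[yX yY].
have tD : perm_on D (tperm x y).
  apply: subset_trans (tperm_on x y) _; apply/subsetP=> z; rewrite !inE.
  by case/orP=> /eqP->; [apply: (subsetP XD) | apply: (subsetP YD)].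
have tXD : tperm x y @: X \subset D.
  apply/subsetP=> z; rewrite mem_imset_perm tpermV => Xz.
  by rewrite -(perm_closed _ tD) (subsetP XD).
have letXYk : #|tperm x y @: X :\: Y| <= k.
  rewrite -ltnS; apply: leq_trans leXYk; rewrite (cardsD1 x (X :\: Y)) !inE xY xX.
  rewrite add1n ltnS; apply: subset_leq_card; apply/subsetP=> z.
  rewrite !inE mem_imset_perm tpermV; case/andP=> zY.
  case: tpermP zY => [->|->|/eqP zx /eqP zy] zY.
  - by rewrite (negbTE yX).
  - by rewrite yY in zY.
  - by rewrite zx zY => ->.
have [s sD sXY] :=
  IHk _ tXD letXYk (etrans (card_imset _ (@perm_inj _ _)) eqXY).
by exists (tperm x y * s)%g; [exact: perm_onM | rewrite imset_permM].
Qed.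

Lemma exists_perm_imset2 (A B A' B' : {set T}) :
  B \subset A -> B' \subset A' -> #|A| = #|A'| -> #|B| = #|B'| ->
  exists s : {perm T}, s @: A = A' /\ s @: B = B'.
Proof.
move=> BA BA' eqA eqB.
have [s1 _ s1A] := exists_perm_on_imset (subsetT A) (subsetT A') eqA.
have s1BA' : s1 @: B \subset A' by rewrite -s1A imsetS.
have [s2 s2A' s2B] :=
  exists_perm_on_imset s1BA' BA' (etrans (card_imset _ (@perm_inj _ _)) eqB).
exists (s1 * s2)%g; rewrite !imset_permM s2B s1A.
by split; first exact: im_perm_on.
Qed.

End PermImset.

Local Open Scope ring_scope.

Lemma sum_mul_sum_symC (R : comPzSemiRingType) (I : finType)
    (c : I -> I -> bool) (f g : I -> R) : (forall x y, c x y = c y x) ->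
  \sum_x f x * \sum_(y | c x y) g y = \sum_y g y * \sum_(x | c y x) f x.
Proof.
move=> c_sym; under eq_bigr do rewrite mulr_sumr.
rewrite (exchange_big_dep xpredT) //=; apply: eq_bigr => y _.
by rewrite mulr_sumr; apply: eq_big => [x|x _]; rewrite 1?c_sym // mulrC.
Qed.

Lemma sum2_mul_sum_swap (R : comPzSemiRingType) (I : finType) (J K : Type)
    (rJ : seq J) (rK : seq K) (a : J -> K -> R) (c : J -> K -> I -> R) (P : I -> R) :
  \sum_(j <- rJ) \sum_(k <- rK) a j k * (\sum_i c j k i * P i) =
  \sum_i P i * (\sum_(j <- rJ) \sum_(k <- rK) a j k * c j k i).
Proof.
under eq_bigr do under eq_bigr do rewrite mulr_sumr.
under eq_bigr do rewrite exchange_big /=.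
rewrite exchange_big /=; apply: eq_bigr => i _.
rewrite mulr_sumr; apply: eq_bigr => j _; rewrite mulr_sumr; apply: eq_bigr => k _.
by rewrite mulrA mulrC.
Qed.

Lemma card_set_ord_le (n : nat) (A : {set 'I_n}) : (#|A| <= n)%N.
Proof. by rewrite -[n in (_ <= n)%N]card_ord max_card. Qed.

Section CardClassSum.
Variables (R : realFieldType) (n : nat).
Implicit Types (A B : {set 'I_n}) (P : {set 'I_n} -> {set 'I_n} -> R).

Definition card_class_sum P A B : R :=
  \sum_(A' : {set 'I_n} | #|A'| == #|A|)
    \sum_(B' : {set 'I_n} | #|B'| == #|B|) P A' B'.

Lemma card_class_sumE P A B : card_class_sum P A B =
  \sum_(p : {set 'I_n} * {set 'I_n} | (#|p.1| == #|A|) && (#|p.2| == #|B|)) P p.1 p.2.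
Proof. exact: pair_big. Qed.

Lemma card_class_sum_swap P A B :
  card_class_sum (fun A' B' => P B' A') A B = card_class_sum P B A.
Proof. exact: exchange_big. Qed.

Lemma sum_mul_card_class_sumC P Q :
  \sum_A \sum_B P A B * card_class_sum Q A B =
  \sum_A \sum_B Q A B * card_class_sum P A B.
Proof.
rewrite !pair_big /=.
under eq_bigr do rewrite card_class_sumE.
under [RHS]eq_bigr do rewrite card_class_sumE.
rewrite (@sum_mul_sum_symC _ _ (fun p q : {set 'I_n} * {set 'I_n} =>
  (#|q.1| == #|p.1|) && (#|q.2| == #|p.2|)) (fun p => P p.1 p.2) (fun p => Q p.1 p.2)) //.
by move=> p q; rewrite (eq_sym #|p.1|) (eq_sym #|p.2|).
Qed.

Lemma card_nested_pairs a b :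
  \sum_(A' : {set 'I_n} | #|A'| == a) \sum_(B' : {set 'I_n} | #|B'| == b)
    (B' \subset A')%:R = ('C(n, a) * 'C(a, b))%:R :> R.
Proof.
have inner A' : #|A'| = a ->
    \sum_(B' : {set 'I_n} | #|B'| == b) (B' \subset A')%:R = 'C(a, b)%:R :> R.
  move=> <-; rewrite -cards_draws -sum1_card natr_sum big_mkcond [RHS]big_mkcond.
  by apply: eq_bigr => B' _; rewrite inE; case: (B' \subset A'); case: (#|B'| == b).
rewrite (eq_bigr _ (fun A' eqA => inner A' (eqP eqA))) sumr_const natrM mulrC mulr_natr.
congr (_ *+ _); rewrite -[in RHS](card_ord n) -card_draws.
by apply: eq_card => X; rewrite inE.
Qed.

Lemma q0_subset A B : B \subset A ->
  q0 R A B * ('C(n, #|A|) * 'C(#|A|, #|B|))%:R = 1.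
Proof.
move=> BA; rewrite /q0 BA mulrAC -natrM.
have leAn := card_set_ord_le A.
have leBA : (#|B| <= #|A|)%N by apply: subset_leq_card.
have -> : ((n - #|A|)`! * (#|A| - #|B|)`! * #|B|`! *
           ('C(n, #|A|) * 'C(#|A|, #|B|)))%N = n`!.
  rewrite -(bin_fact leAn) -(bin_fact leBA); nia.
by rewrite mulfV // pnatr_eq0 -lt0n fact_gt0.
Qed.

Lemma q0C A B : q0 R A B = q0 R B A.
Proof.
rewrite /q0; case BA: (B \subset A); case AB: (A \subset B) => //.
by have /eqP -> : A == B by rewrite eqEsubset AB BA.
Qed.

Lemma exchangeable_subset P :
  (forall A B, ~~ (B \subset A) -> P A B = 0) ->
  (forall A B (s : {perm 'I_n}), P (s @: A) (s @: B) = P A B) ->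
  forall A B, P A B = q0 R A B * card_class_sum P A B.
Proof.
move=> P0 Pperm A B; have [BA|nBA] := boolP (B \subset A).
  have -> : card_class_sum P A B = P A B * ('C(n, #|A|) * 'C(#|A|, #|B|))%:R.
    rewrite -card_nested_pairs mulr_sumr; apply: eq_bigr => A' /eqP eqA.
    rewrite mulr_sumr; apply: eq_bigr => B' /eqP eqB.
    have [B'A'|nB'A'] := boolP (B' \subset A'); last by rewrite P0 ?mulr0.
    have [s [<- <-]] := exists_perm_imset2 BA B'A' (esym eqA) (esym eqB).
    by rewrite Pperm mulr1.
  by rewrite mulrCA q0_subset // mulr1.
rewrite P0 // /q0 (negbTE nBA); case: ifP => AB; last by rewrite mul0r.
rewrite /card_class_sum big1 ?mulr0 // => A' /eqP eqA.
rewrite big1 // => B' /eqP eqB; apply: P0; apply/negP => /subset_leq_card.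
by rewrite eqA eqB leqNgt proper_card // properE AB.
Qed.

Lemma exchangeable_supset P :
  (forall A B, ~~ (A \subset B) -> P A B = 0) ->
  (forall A B (s : {perm 'I_n}), P (s @: A) (s @: B) = P A B) ->
  forall A B, P A B = q0 R A B * card_class_sum P A B.
Proof.
move=> P0 Pperm A B.
rewrite (@exchangeable_subset (fun A' B' => P B' A')).
- by rewrite q0C card_class_sum_swap.
- by move=> A' B' /P0.
- by move=> A' B' s; apply: Pperm.
Qed.

End CardClassSum.

Lemma event_ext (Ω : Type) (M : (Ω -> bool) -> Prop) (E F : Ω -> bool) :
  (forall w, E w = F w) -> M E -> M F.
Proof. by move=> /functional_extensionality ->. Qed.

Section FinitelyAdditiveProbability.
Variables (R : realFieldType) (Ω : Type).
Variables (M : (Ω -> bool) -> Prop) (Pr : (Ω -> bool) -> R).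
Hypothesis HPr : fa_prob M Pr.

Lemma event_true : M (fun _ => true).
Proof. by case: HPr. Qed.

Lemma event_neg E : M E -> M (fun w => ~~ E w).
Proof. by case: HPr => _ [negE _]; apply: negE. Qed.

Lemma event_or E F : M E -> M F -> M (fun w => E w || F w).
Proof. by case: HPr => _ [_ [orE _]]; apply: orE. Qed.

Lemma Pr_ext E F : (forall w, E w = F w) -> Pr E = Pr F.
Proof. by case: HPr => _ [_ [_ [_ [_ [_ extPr]]]]]; apply: extPr. Qed.

Lemma Pr_disjoint_or E F : M E -> M F -> (forall w, ~~ (E w && F w)) ->
  Pr (fun w => E w || F w) = Pr E + Pr F.
Proof. by case: HPr => _ [_ [_ [_ [_ [addPr _]]]]]; apply: addPr. Qed.

Lemma event_false : M (fun _ => false).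
Proof. exact: event_neg event_true. Qed.

Lemma event_and E F : M E -> M F -> M (fun w => E w && F w).
Proof.
move=> ME MF; apply: event_ext (event_neg (event_or (event_neg ME) (event_neg MF))).
by move=> w; rewrite negb_or !negbK.
Qed.

Lemma event_all (I : Type) (E : I -> Ω -> bool) (s : seq I) :
  (forall i, M (E i)) -> M (fun w => all (E^~ w) s).
Proof. by move=> ME; elim: s => [|i s IHs] /=; [exact: event_true | exact: event_and]. Qed.

Lemma event_has (I : Type) (E : I -> Ω -> bool) (s : seq I) :
  (forall i, M (E i)) -> M (fun w => has (E^~ w) s).
Proof. by move=> ME; elim: s => [|i s IHs] /=; [exact: event_false | exact: event_or]. Qed.

Lemma Pr_false : Pr (fun _ => false) = 0.
Proof.
apply: (@addrI _ (Pr (fun _ => false))).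
by rewrite addr0 -Pr_disjoint_or //; exact: event_false.
Qed.

Lemma Pr_has_disjoint (I : eqType) (E : I -> Ω -> bool) (s : seq I) :
  uniq s -> (forall i, M (E i)) -> (forall i j w, E i w -> E j w -> i = j) ->
  Pr (fun w => has (E^~ w) s) = \sum_(i <- s) Pr (E i).
Proof.
move=> + ME Edisj; elim: s => [|i s IHs] /=; first by rewrite big_nil Pr_false.
case/andP=> i_s uniq_s; rewrite big_cons -IHs // Pr_disjoint_or //.
  exact: event_has.
move=> w; apply/negP => /andP[Eiw /hasP[j js Ejw]].
by move: i_s; rewrite (Edisj _ _ _ Eiw Ejw) js.
Qed.

Lemma Pr_preimage (I : finType) (X : Ω -> I) (Q : pred I) :
  (forall i, M (fun w => X w == i)) ->
  Pr (fun w => Q (X w)) = \sum_(i | Q i) Pr (fun w => X w == i).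
Proof.
move=> MX; rewrite -big_enum /= -(@Pr_has_disjoint _ (fun i w => X w == i)).
- apply: Pr_ext => w; apply/idP/hasP => [QXw|[i]]; first by exists (X w); rewrite ?mem_enum.
  by rewrite mem_enum => + /eqP ->.
- exact: enum_uniq.
- exact: MX.
- by move=> i j w /eqP <- /eqP.
Qed.

End FinitelyAdditiveProbability.

Lemma lt_nth_sorted (R : realDomainType) (t : R) (s : seq R) (i : nat) :
  sorted <=%R s -> (i < size s)%N ->
  (t < nth 0 s i) = (size s - count (fun x => (t < x)%R) s <= i)%N.
Proof.
elim: s i => [|x s IHs] i //= x_s lt_i_s.
have x_le := order_path_min (@le_trans _ R) x_s.
have count_le := count_size (fun x => (t < x)%R) s.
have [t_x|/le_gtF t_x] := ltP t x; last first.
  case: i lt_i_s => [|i] lt_i_s /=; rewrite ?t_x ?IHs ?(path_sorted x_s) //;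
    (* [set] merges copies of [count _ s] and [size s] elaborated at
       convertible but distinct element types, which lia would keep apart. *)
    by move: count_le; set c := count _ s; set m := size s; lia.
have -> : count (fun y => t < y) s = size s.
  apply/eqP; rewrite -all_count; apply/allP => y ys.
  exact: lt_le_trans t_x (allP x_le y ys).
case: i lt_i_s => [|i] lt_i_s /=; first by rewrite t_x /=; lia.
by rewrite (lt_le_trans t_x) ?(allP x_le) ?mem_nth //; lia.
Qed.

Lemma ostat_gt (R : realFieldType) (Ω : Type) (n : nat) (T : 'I_n -> Ω -> R)
    (k : nat) (t : R) (w : Ω) :
  (0 < k <= n)%N -> (t < ostat T k w) = (n - k < #|Xt T t w|)%N.
Proof.
case/andP=> k_gt0 k_le_n; rewrite /ostat.
set s := sort _ _.
have size_s : size s = n by rewrite size_sort size_map size_enum_ord.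
rewrite lt_nth_sorted ?size_s; [|apply: sort_sorted => x y; exact: le_total|lia].
have -> : count (fun x => t < x) s = #|Xt T t w|.
  rewrite (seq.permP (permEl (perm_sort _ _))) count_map /Xt cardsE cardE.
  by rewrite /enum_mem size_filter count_filter; apply: eq_count => j; rewrite /= andbT.
lia.
Qed.

Lemma telescope_gt (R : zmodType) (f : nat -> R) (n m : nat) : (m <= n)%N ->
  \sum_(1 <= k < n.+1) (f k.-1 - f k) *+ (m < k)%N = f m - f n.
Proof.
move=> le_mn; rewrite big_add1 /= (big_cat_nat _ le_mn) //= big_nat_cond big1.
  rewrite add0r (eq_big_nat _ _ (F2 := fun k => - (f k.+1 - f k))).
    by rewrite sumrN telescope_sumr // opprB.
  by move=> k /andP[le_mk _]; rewrite ltnS le_mk mulr1n opprB.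
by move=> k /andP[/andP[_ lt_km] _]; rewrite ltnS leqNgt lt_km mulr0n.
Qed.

Lemma telescope2_gt (R : zmodType) (X : nat -> nat -> R) (n m p : nat) :
  (m <= n)%N -> (p <= n)%N -> (forall l, X n l = 0) -> (forall k, X k n = 0) ->
  \sum_(1 <= k < n.+1) \sum_(1 <= l < n.+1)
     (X k.-1 l.-1 - X k l.-1 - X k.-1 l + X k l) *+ ((m < k) && (p < l))%N = X m p.
Proof.
move=> le_mn le_pn Xn_ Xkn.
have inner k : \sum_(1 <= l < n.+1)
    (X k.-1 l.-1 - X k l.-1 - X k.-1 l + X k l) *+ ((m < k) && (p < l))%N =
    (X k.-1 p - X k p) *+ (m < k)%N.
  case: (m < k)%N; last by rewrite big1.
  have := telescope_gt (fun l => X k.-1 l - X k l) le_pn.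
  rewrite /= !Xkn !subr0 => <-.
  by apply: eq_bigr => l _; rewrite opprD opprK addrA.
by rewrite (eq_bigr _ (fun k _ => inner k)) telescope_gt // Xn_ subr0.
Qed.

Section Signature.
Variables (R : realFieldType) (n : nat) (phi1 phi2 : {set 'I_n} -> bool).
Hypotheses (sc1 : semicoherent phi1) (sc2 : semicoherent phi2).

Lemma Sbar_n_l l : Sbar R phi1 phi2 n l = 0.
Proof.
case: sc1 => _ [phi1_0 _]; rewrite /Sbar big1 // => A; rewrite subnn cards_eq0.
by move=> /eqP ->; rewrite big1 // => B _; rewrite phi1_0 mulr0 mul0r.
Qed.

Lemma Sbar_k_n k : Sbar R phi1 phi2 k n = 0.
Proof.
case: sc2 => _ [phi2_0 _]; rewrite /Sbar big1 // => A _; rewrite big1 // => B.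
by rewrite subnn cards_eq0 => /eqP ->; rewrite phi2_0 mulr0.
Qed.

Lemma sum_jsig_gt m p : (m <= n)%N -> (p <= n)%N ->
  \sum_(1 <= k < n.+1) \sum_(1 <= l < n.+1)
    jsig R phi1 phi2 k l *+ ((m < k) && (p < l))%N = Sbar R phi1 phi2 m p.
Proof. by move=> le_mn le_pn; apply: telescope2_gt; [| |exact: Sbar_n_l|exact: Sbar_k_n]. Qed.

End Signature.

Lemma Sbar_card_class_sum (R : realFieldType) (n : nat)
    (phi1 phi2 : {set 'I_n} -> bool) (A B : {set 'I_n}) :
  Sbar R phi1 phi2 (n - #|A|) (n - #|B|) =
  card_class_sum (fun A' B' => q0 R A' B' * (phi1 A')%:R * (phi2 B')%:R) A B.
Proof. by rewrite /Sbar !subKn ?card_set_ord_le. Qed.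

Lemma Xt_subset (R : realFieldType) (Ω : Type) (n : nat) (T : 'I_n -> Ω -> R)
    (s t : R) (w : Ω) :
  s <= t -> Xt T t w \subset Xt T s w.
Proof. by move=> le_st; apply/subsetP => j; rewrite !inE; apply: le_lt_trans. Qed.

Section States.
Variables (R : realFieldType) (Ω : Type) (n : nat).
Variables (M : (Ω -> bool) -> Prop) (Pr : (Ω -> bool) -> R) (T : 'I_n -> Ω -> R).
Hypothesis HPr : fa_prob M Pr.
Hypothesis event_alive : forall j t, M (fun w => t < T j w).

Lemma event_Xt_eq t (A : {set 'I_n}) : M (fun w => Xt T t w == A).
Proof.
have Xt_eqE w : (Xt T t w == A) = all (fun j => (t < T j w) == (j \in A)) (enum 'I_n).
  apply/eqP/allP => [<- j _ | alive_A]; first by rewrite inE.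
  by apply/setP => j; rewrite inE; apply/eqP/alive_A; rewrite mem_enum.
apply: (event_ext (fun w => esym (Xt_eqE w))).
apply: (event_all HPr) => j; case: (j \in A).
  by apply: event_ext _ (event_alive j t) => w; rewrite eqb_id.
by apply: event_ext _ (event_neg HPr (event_alive j t)) => w; rewrite eqbF_neg.
Qed.

Variables t1 t2 : R.

Definition state_prob (A B : {set 'I_n}) : R :=
  Pr (fun w => (Xt T t1 w == A) && (Xt T t2 w == B)).

Lemma Pr_states (Q : {set 'I_n} -> {set 'I_n} -> bool) :
  Pr (fun w => Q (Xt T t1 w) (Xt T t2 w)) =
  \sum_A \sum_B (Q A B)%:R * state_prob A B.
Proof.
rewrite (Pr_preimage HPr (X := fun w => (Xt T t1 w, Xt T t2 w)) (fun p => Q p.1 p.2)).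
  rewrite pair_big big_mkcond; apply: eq_bigr => -[A B] _ /=.
  by case: (Q A B); rewrite ?mul1r ?mul0r.
by move=> [A B]; apply: (event_and HPr); apply: event_Xt_eq.
Qed.

Lemma Pr_ostat k l : (0 < k <= n)%N -> (0 < l <= n)%N ->
  Pr (fun w => (t1 < ostat T k w) && (t2 < ostat T l w)) =
  \sum_(A : {set 'I_n}) \sum_(B : {set 'I_n})
    ((n - k < #|A|) && (n - l < #|B|))%N%:R * state_prob A B.
Proof.
move=> k_in l_in; rewrite -Pr_states.
by apply: (Pr_ext HPr) => w; rewrite !ostat_gt.
Qed.

Lemma sum_jsig_Pr_ostat (phi1 phi2 : {set 'I_n} -> bool) :
  semicoherent phi1 -> semicoherent phi2 ->
  \sum_(1 <= k < n.+1) \sum_(1 <= l < n.+1)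
    jsig R phi1 phi2 k l * Pr (fun w => (t1 < ostat T k w) && (t2 < ostat T l w)) =
  \sum_(A : {set 'I_n}) \sum_(B : {set 'I_n})
    state_prob A B * Sbar R phi1 phi2 (n - #|A|) (n - #|B|).
Proof.
move=> sc1 sc2.
under eq_big_nat => k k_in do under eq_big_nat => l l_in do rewrite Pr_ostat // pair_big.
rewrite sum2_mul_sum_swap pair_big; apply: eq_bigr => -[A B] _ /=; congr (_ * _).
rewrite -sum_jsig_gt ?leq_subr //; apply: eq_big_nat => k /andP[k_gt0 k_le].
apply: eq_big_nat => l /andP[l_gt0 l_le]; rewrite mulr_natr; congr (_ *+ _).
by have := card_set_ord_le A; have := card_set_ord_le B; lia.
Qed.

Hypothesis state_prob_perm :
  forall (A B : {set 'I_n}) (s : {perm 'I_n}),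
  state_prob (s @: A) (s @: B) = state_prob A B.

Lemma state_prob_exchangeable A B :
  state_prob A B = q0 R A B * card_class_sum state_prob A B.
Proof.
have state_prob0 (A' B' : {set 'I_n}) :
    (forall w, Xt T t1 w = A' -> Xt T t2 w = B' -> False) -> state_prob A' B' = 0.
  move=> never; rewrite /state_prob -(Pr_false HPr); apply: (Pr_ext HPr) => w.
  by apply/negbTE/negP => /andP[/eqP /never + /eqP].
have [le12 | /ltW le21] := lerP t1 t2.
- apply: exchangeable_subset => // A' B' nB'A'; apply: state_prob0 => w eA eB.
  by move: nB'A'; rewrite -eA -eB Xt_subset.
- apply: exchangeable_supset => // A' B' nA'B'; apply: state_prob0 => w eA eB.
  by move: nA'B'; rewrite -eA -eB Xt_subset.
Qed.

End States.

Theorem proposition12 (R : realFieldType) (Ω : Type) (n : nat)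
  (M : (Ω -> bool) -> Prop) (Pr : (Ω -> bool) -> R)
  (T : 'I_n -> Ω -> R) (phi1 phi2 : {set 'I_n} -> bool) (TS1 TS2 : Ω -> R) :
  (0 < n)%N ->
  fa_prob M Pr ->
  (forall j t, M (fun w => t < T j w)) ->
  (forall j w, 0 <= T j w) ->
  M (ties_event T) -> Pr (ties_event T) = 0 ->
  semicoherent phi1 -> semicoherent phi2 ->
  is_lifetime phi1 T TS1 -> is_lifetime phi2 T TS2 ->
  (forall (A B : {set 'I_n}) (t1 t2 : R) (s : {perm 'I_n}),
     0 <= t1 -> 0 <= t2 ->
     Pr (fun w => (Xt T t1 w == A) && (Xt T t2 w == B)) =
     Pr (fun w => (Xt T t1 w == s @: A) && (Xt T t2 w == s @: B))) ->
  forall t1 t2 : R, 0 <= t1 -> 0 <= t2 ->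
    Pr (fun w => (t1 < TS1 w) && (t2 < TS2 w)) =
    \sum_(1 <= k < n.+1) \sum_(1 <= l < n.+1)
       jsig R phi1 phi2 k l *
       Pr (fun w => (t1 < ostat T k w) && (t2 < ostat T l w)).
Proof.
move=> _ HPr event_alive _ _ _ sc1 sc2 life1 life2 perm_inv t1 t2 t1_ge0 t2_ge0.
set P := state_prob Pr T t1 t2.
have P_perm (A B : {set 'I_n}) (s : {perm 'I_n}) : P (s @: A) (s @: B) = P A B.
  by rewrite /P /state_prob -perm_inv.
rewrite (sum_jsig_Pr_ostat HPr event_alive) // -/P.
under eq_bigr do under eq_bigr do rewrite Sbar_card_class_sum.
rewrite sum_mul_card_class_sumC.
rewrite -(Pr_ext HPr (E := fun w => phi1 (Xt T t1 w) && phi2 (Xt T t2 w))); last first.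
  by move=> w; rewrite life1 // life2.
rewrite (Pr_states HPr event_alive t1 t2 (fun A B => phi1 A && phi2 B)) -/P.
apply: eq_bigr => A _; apply: eq_bigr => B _.
have := state_prob_exchangeable HPr P_perm A B; rewrite -/P => ->.
by rewrite -mulnb natrM; ring.
Qed.
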